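(* For $i=1,\dots,d$ let $\omega_i\subseteq\mathbb{R}$ be a nonempty open interval and $f_i:\omega_i\to\mathbb{R}$ a univariate function of Legendre type. Let $\Omega'\subseteq\prod_{i=1}^d\omega_i$ be a nonempty open convex set and let $D'_F$ be the decomposable Bregman divergence on $\Omega'\times\Omega'$ generated by $F(x)=\sum_{i=1}^d f_i(x_i)$, i.e. $D'_F(x\|y)=F(x)-F(y)-\langle\nabla F(y),x-y\rangle$ for $x,y\in\Omega'$. Then $D'_F$ is the restriction to $\Omega'\times\Omega'$ of a Bregman divergence (generated by a function of Legendre type) defined on the axis-aligned box $\Omega=\prod_{i=1}^d\omega_i$.
   Context: A function $G:U\to\mathbb{R}$ on a nonempty open convex set $U\subseteq\mathbb{R}^k$ is of Legendre type if (I) it is differentiable, (II) it is strictly convex, and (III) if $\partial U$ is nonempty, then $\|\nabla G(x)\|\to\infty$ as $x\to\partial U$. The Bregman divergence generated by $G$ is $D_G(x\|y)=G(x)-G(y)-\langle\nabla G(y),x-y\rangle$ on $U\times U$. A decomposable Bregman divergence is one generated by $F(x)=\sum_{i=1}^d f_i(x_i)$ with each $f_i$ a univariate function of Legendre type; then $D_F(x\|y)=\sum_i D_{f_i}(x_i\|y_i)$. *)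

From HB Require Import structures.
From mathcomp Require Import all_boot all_order all_algebra.
From mathcomp Require Import all_classical all_reals all_analysis.
Set Implicit Arguments. Unset Strict Implicit. Unset Printing Implicit Defensive.
Import Order.TTheory GRing.Theory Num.Theory.
Import numFieldNormedType.Exports.
Local Open Scope classical_set_scope.
Local Open Scope ring_scope.

Definition grad {R : realType} {k : nat} (G : 'rV[R]_k -> R) (x : 'rV[R]_k)
  : 'rV[R]_k := \row_i ('d G x (delta_mx 0 i)).

(* G : U -> R of Legendre type (U nonempty open convex); G is given as a
   total function, only its values on U matter. *)
Definition legendre {R : realType} {k : nat} (U : set 'rV[R]_k)
    (G : 'rV[R]_k -> R) : Prop :=
  (U !=set0) /\ open U /\ convex_set U /\
      (forall x, U x -> differentiable G x) /\
      (forall x y, U x -> U y -> x != y -> forall t : R, 0 < t < 1 ->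
         G (t *: x + (1 - t) *: y) < t * G x + (1 - t) * G y) /\
      (forall b, closure U b -> ~ U b ->
         (fun x => `|grad G x|) @ within U (nbhs b) --> +oo).

Definition legendre1 {R : realType} (w : set R) (f : R -> R) : Prop :=
  (w !=set0) /\ open w /\ is_interval w /\
      (forall x, w x -> derivable f x 1) /\
      (forall x y, w x -> w y -> x != y -> forall t : R, 0 < t < 1 ->
         f (t * x + (1 - t) * y) < t * f x + (1 - t) * f y) /\
      (forall b, closure w b -> ~ w b ->
         (fun x => `|derive1 f x|) @ within w (nbhs b) --> +oo).

(* Bregman divergence D_G(x||y) = G x - G y - <grad G y, x - y>,
   with <grad G y, x - y> written as the differential 'd G y (x - y). *)
Definition bregman {R : realType} {k : nat} (G : 'rV[R]_k -> R)
    (x y : 'rV[R]_k) : R :=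
  G x - G y - 'd G y (x - y).

Definition decomp {R : realType} {d : nat} (f : 'I_d -> R -> R)
    (x : 'rV[R]_d) : R := \sum_(i < d) f i (x ord0 i).

Definition box {R : realType} {d : nat} (w : 'I_d -> set R) : set 'rV[R]_d :=
  [set x | forall i, w i (x ord0 i)].

From HB Require Import structures.
From mathcomp Require Import all_boot all_order all_algebra.
From mathcomp Require Import all_classical all_reals all_analysis.
From mathcomp Require Import lra.
Set Implicit Arguments.
Unset Strict Implicit.
Unset Printing Implicit Defensive.
Import Order.TTheory GRing.Theory Num.Theory.
Import numFieldNormedType.Exports.
Local Open Scope classical_set_scope.
Local Open Scope ring_scope.

(* The generator F itself is of Legendre type on the whole box, so it is its
   own extension and the two divergences agree on Om' for free.  All three
   Legendre conditions are checked coordinatewise: grad F x is the row of the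
   f_i'(x_i); F is strictly convex because some f_j is strictly convex along a
   coordinate where x and y differ; and when x tends to a boundary point b of
   the box, some b_j lies on the boundary of w_j, so that
   |grad F x| >= |f_j'(x_j)| -> +oo. *)

Lemma closure_image_continuous (T U : topologicalType) (f : T -> U)
    (A : set T) b :
  {for b, continuous f} -> closure A b -> closure (f @` A) (f b).
Proof.
by move=> fc Ab B /fc /Ab [x [Ax Bfx]]; exists (f x); split => //; exists x.
Qed.

Lemma ltr_sum_ler (R : numDomainType) (I : finType) (F G : I -> R) j :
  (forall i, F i <= G i) -> F j < G j -> \sum_i F i < \sum_i G i.
Proof.
move=> le_FG lt_FGj; rewrite (bigD1 j) //= [ltRHS](bigD1 j) //=.
by rewrite ltr_leD // ler_sum.
Qed.

Section differential_sum.
Context {R : numFieldType} {V W : normedModType R}.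

Lemma diff_sum n (F : 'I_n -> V -> W) x v :
  (forall i, differentiable (F i) x) ->
  'd (\sum_(i < n) F i) x v = \sum_(i < n) 'd (F i) x v.
Proof.
move=> dF; rewrite -deriveE; last exact: differentiable_sum.
rewrite derive_sum => [|i]; last exact: diff_derivable.
by apply: eq_bigr => i _; rewrite deriveE.
Qed.

End differential_sum.

Section coordinates.
Context {R : realType} {m n : nat}.

Definition mxcoord (i : 'I_m) (j : 'I_n) (M : 'M[R]_(m, n)) : R := M i j.

Fact mxcoord_is_linear i j : linear (mxcoord i j).
Proof. by move=> a M N; rewrite /mxcoord !mxE. Qed.

HB.instance Definition _ i j :=
  GRing.isLinear.Build R 'M[R]_(m, n) R *:%R (mxcoord i j)
    (mxcoord_is_linear i j).

Lemma diff_mxcoord i j M : 'd (mxcoord i j) M = mxcoord i j :> (_ -> _).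
Proof. exact/diff_lin/coord_continuous. Qed.

Lemma ler_mxcoord_norm i j M : `|mxcoord i j M| <= `|M|.
Proof. by rewrite [leRHS]/Num.norm /= mx_normrE (le_bigmax _ _ (i, j)). Qed.

End coordinates.

Section decomposable.
Context {R : realType} {d : nat}.
Implicit Types (w : 'I_d -> set R) (f : 'I_d -> R -> R) (x y : 'rV[R]_d).

Lemma decompE f : decomp f = \sum_(i < d) (f i \o mxcoord ord0 i).
Proof. by apply/funext => x; rewrite /decomp fct_sumE. Qed.

Section differential.
Variables (f : 'I_d -> R -> R) (x : 'rV[R]_d).
Hypothesis df : forall i, differentiable (f i) (x ord0 i).

Let dfcoord i : differentiable (f i \o mxcoord ord0 i) x.
Proof. exact: differentiable_comp (differentiable_coord _ _ _) (df i). Qed.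

Lemma differentiable_decomp : differentiable (decomp f) x.
Proof. by rewrite decompE; apply: differentiable_sum. Qed.

Lemma diff_decomp v :
  'd (decomp f) x v = \sum_(i < d) v ord0 i * derive1 (f i) (x ord0 i).
Proof.
rewrite decompE diff_sum //; apply: eq_bigr => i _.
by rewrite diff_comp ?diff_mxcoord /= ?diff1E //; exact: differentiable_coord.
Qed.

Lemma grad_decomp j : grad (decomp f) x ord0 j = derive1 (f j) (x ord0 j).
Proof.
rewrite /grad mxE diff_decomp (bigD1 j) //= big1 => [|i neq_ij].
  by rewrite mxE !eqxx mul1r addr0.
by rewrite mxE (negbTE neq_ij) mul0r.
Qed.

End differential.

Lemma box_neq0 w : (forall i, w i !=set0) -> box w !=set0.
Proof.
move=> w0; exists (\row_i projT1 (cid (w0 i))) => i.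
by rewrite mxE; exact: projT2 (cid (w0 i)).
Qed.

Lemma open_box w : (forall i, open (w i)) -> open (box w).
Proof.
move=> ow; rewrite openE => x wx.
suff : \forall y \near x, forall i, w i ((y : 'rV[R]_d) ord0 i) by [].
apply: (@filter_forall _ 'I_d (fun i (y : 'rV[R]_d) => w i (y ord0 i)) (nbhs x))
  => i.
have wxi : nbhs (x ord0 i) (w i).
  by move: (ow i); rewrite openE; apply; exact: wx.
exact: (@coord_continuous R 1 d ord0 i x _ wxi).
Qed.

Lemma is_interval_conv (E : set R) a b t : is_interval E ->
  E a -> E b -> 0 <= t <= 1 -> E (t * a + (1 - t) * b).
Proof.
move=> iE Ea Eb /andP[t0 t1].
have [ab|ba] := leP a b; [apply: (iE a b) | apply: (iE b a)] => //;
  apply/andP; split; nra.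
Qed.

Lemma convex_box w : (forall i, is_interval (w i)) -> convex_set (box w).
Proof.
move=> iw x y t; rewrite !inE => wx wy i.
have -> : conv t x y = t%:num *: x + (1 - t%:num) *: y by [].
by rewrite !mxE; apply: is_interval_conv => //; rewrite ge0 le1.
Qed.

Lemma decomp_strictly_convex w f :
  (forall i a b, w i a -> w i b -> a != b -> forall t, 0 < t < 1 ->
     f i (t * a + (1 - t) * b) < t * f i a + (1 - t) * f i b) ->
  forall x y, box w x -> box w y -> x != y -> forall t, 0 < t < 1 ->
  decomp f (t *: x + (1 - t) *: y) < t * decomp f x + (1 - t) * decomp f y.
Proof.
move=> convf x y wx wy neq_xy t t01.
have /existsP[j neq_j] : [exists j, x ord0 j != y ord0 j].
  apply: contraR neq_xy => /existsPn eq_xy.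
  by apply/eqP/rowP => j; apply/eqP/negPn/eq_xy.
rewrite /decomp !mulr_sumr -big_split /=.
apply: (@ltr_sum_ler _ 'I_d _ _ j) => [i|]; rewrite !mxE; last exact: convf.
have [->|neq_i] := eqVneq (x ord0 i) (y ord0 i); last exact/ltW/convf.
by rewrite -!mulrDl addrC subrK !mul1r.
Qed.

Lemma decomp_grad_cvgy w f b :
  (forall x, box w x -> forall i, differentiable (f i) (x ord0 i)) ->
  (forall i a, closure (w i) a -> ~ w i a ->
     (fun t => `|derive1 (f i) t|) @ within (w i) (nbhs a) --> +oo) ->
  closure (box w) b -> ~ box w b ->
  (fun x => `|grad (decomp f) x|) @ within (box w) (nbhs b) --> +oo.
Proof.
move=> df blowup clb wb.
have [j wbj] : exists j, ~ w j (b ord0 j) by apply/existsNP.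
have coordj_cont : {for b, continuous (mxcoord ord0 j)} :=
  @coord_continuous R 1 d ord0 j b.
have clbj : closure (w j) (b ord0 j).
  move: (closure_image_continuous coordj_cont clb); apply: closureS.
  by move=> _ [x wx <-]; exact: wx.
move/cvgryPge: (blowup j _ clbj wbj) => blowupj; apply/cvgryPge => A.
rewrite nearE /within /= nearE.
have : \forall x \near b,
    w j ((x : 'rV[R]_d) ord0 j) -> A <= `|derive1 (f j) (x ord0 j)|.
  exact: coordj_cont (blowupj A).
apply: filterS => x blowx wx.
apply: le_trans (blowx (wx j)) _.
rewrite -(grad_decomp (df x wx)); exact: ler_mxcoord_norm.
Qed.

Lemma legendre_decomp w f :
  (forall i, legendre1 (w i) (f i)) -> legendre (box w) (decomp f).
Proof.
move=> legf.
have df x : box w x -> forall i, differentiable (f i) (x ord0 i).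
  move=> wx i; have [_ [_ [_ [dfi _]]]] := legf i.
  exact/derivable1_diffP/dfi.
split; first by apply: box_neq0 => i; case: (legf i).
split; first by apply: open_box => i; case: (legf i) => _ [].
split; first by apply: convex_box => i; case: (legf i) => _ [_ []].
split; first by move=> x /df; exact: differentiable_decomp.
split.
  by apply: decomp_strictly_convex => i; case: (legf i) => _ [_ [_ [_ []]]].
move=> b; apply: decomp_grad_cvgy => // i.
by case: (legf i) => _ [_ [_ [_ [_ ]]]].
Qed.

End decomposable.

Theorem lemma4 (R : realType) (d : nat) (w : 'I_d -> set R)
  (f : 'I_d -> R -> R)
  (hw : forall i, w i !=set0 /\ open (w i) /\ is_interval (w i))
  (hf : forall i, legendre1 (w i) (f i))
  (Om' : set 'rV[R]_d)
  (hOm'0 : Om' !=set0) (hOm'open : open Om') (hOm'conv : convex_set Om')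
  (hOm'sub : Om' `<=` box w) :
  exists G : 'rV[R]_d -> R,
    legendre (box w) G /\
    (forall x y, Om' x -> Om' y -> bregman G x y = bregman (decomp f) x y).
Proof. by exists (decomp f); split; first exact: legendre_decomp. Qed.
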